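(* Let $N=pq$ with $p,q$ distinct primes. Let $b\in\mathbb{Z}$ and let $f=n_2X^2+n_1X+n_0\in\mathbb{Z}[X]$ be of degree $2$ with $f(b)=N$. If $\gcd(n_2b,N)=1$ and $\gcd(N,n_2b^2-n_0)=1$, then $\nu(f)=2p+2q-8$.
   Context: $Z_N=\{0,1,\dots,N-1\}$. For $g\in\mathbb{Z}[X]$, an element $x\in Z_N$ is called suitable for $g$ if $1<\gcd(g(x),N)<N$, and $\nu(g)$ denotes the number of $x\in Z_N$ suitable for $g$. *)

From mathcomp Require Import all_boot all_order all_algebra.
Set Implicit Arguments. Unset Strict Implicit. Unset Printing Implicit Defensive.
Import Order.TTheory GRing.Theory Num.Theory.
Local Open Scope ring_scope.

Definition suitable (N : nat) (g : {poly int}) (x : nat) : bool :=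
  (1 < gcdz g.[x%:Z] N%:Z) && (gcdz g.[x%:Z] N%:Z < N%:Z).

Definition nu (N : nat) (g : {poly int}) : nat :=
  #|[set x : 'I_N | suitable N g x]|.

From mathcomp Require Import all_boot all_order all_algebra.
From mathcomp Require Import ring zify.
Import Order.TTheory GRing.Theory Num.Theory.
Set Implicit Arguments.
Unset Strict Implicit.
Unset Printing Implicit Defensive.
Local Open Scope ring_scope.

(* By the Chinese remainder theorem, x is suitable for f exactly when f(x)
   vanishes modulo one of p, q but not the other.  Modulo each prime r | N,
   f has the root b, and the hypotheses say that its leading coefficient is
   nonzero and that b is not a double root (the other root is n0/(n2 b)), so
   f has exactly two roots in F_r.  Hence
   nu(f) = 2(q - 2) + (p - 2)2 = 2p + 2q - 8. *)

Lemma quadratic_roots (F : fieldType) (a c1 c0 b : F) :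
  let quad := a *: 'X^2 + c1 *: 'X + c0%:P in
  a != 0 -> root quad b -> a * b ^+ 2 != c0 ->
  exists2 c, b != c & forall u, root quad u = (u == b) || (u == c).
Proof.
move=> quad a0 qb bc0.
have quadE u : quad.[u] = a * u ^+ 2 + c1 * u + c0 by rewrite !hornerE.
have b0 : b != 0.
  apply: contraNneq bc0 => b0; move: qb.
  by rewrite /root quadE b0 expr0n !mulr0 !add0r eq_sym.
have c0E : c0 = - (a * b ^+ 2 + c1 * b).
  by apply/eqP; rewrite -addr_eq0 addrC; move: qb; rewrite /root quadE.
exists (c0 / (a * b)).
  apply: contraNneq bc0 => eb; rewrite expr2 mulrA {2}eb; apply/eqP; field.
  by rewrite a0 b0.
move=> u; rewrite /root quadE.
have -> : a * u ^+ 2 + c1 * u + c0 = a * (u - b) * (u - c0 / (a * b)).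
  by rewrite c0E; field; rewrite a0 b0.
by rewrite !mulf_eq0 (negbTE a0) !subr_eq0.
Qed.

Lemma card_quadratic_roots (F : finFieldType) (a c1 c0 b : F) :
  a != 0 -> root (a *: 'X^2 + c1 *: 'X + c0%:P) b -> a * b ^+ 2 != c0 ->
  #|[set u | root (a *: 'X^2 + c1 *: 'X + c0%:P) u]| = 2%N.
Proof.
move=> a0 rb bc0; have [c bc rootE] := quadratic_roots a0 rb bc0.
have -> : [set u | root (a *: 'X^2 + c1 *: 'X + c0%:P) u] = [set b; c].
  by apply/setP => u; rewrite !inE rootE.
by rewrite cards2 bc.
Qed.

Lemma dvdz_root_Fp (r : nat) (g : {poly int}) (x : int) : prime r ->
  (r%:Z %| g.[x])%Z = root (map_poly intr g) (x%:~R : 'F_r).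
Proof. by move=> r_pr; rewrite /root horner_map (dvdz_pcharf (pchar_Fp r_pr)). Qed.

Lemma map_poly_quadratic (R S : nzRingType) (f : {rmorphism R -> S}) (a c1 c0 : R) :
  map_poly f (a *: 'X^2 + c1 *: 'X + c0%:P) = f a *: 'X^2 + f c1 *: 'X + (f c0)%:P.
Proof. by rewrite !rmorphD /= !map_polyZ map_polyXn map_polyX map_polyC. Qed.

Lemma prime_ndvdz_coprime (r : nat) (u v : int) :
  prime r -> (r%:Z %| v)%Z -> gcdz u v = 1 -> ~~ (r%:Z %| u)%Z.
Proof.
move=> r_pr rv uv; apply/negP => ru.
have : (r%:Z %| gcdz u v)%Z by rewrite dvdz_gcd ru rv.
by rewrite uv dvdz1 absz_nat; apply/negP; rewrite neq_ltn prime_gt1 ?orbT.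
Qed.

Lemma suitable_prime_prod (p q : nat) (g : {poly int}) (x : nat) :
  prime p -> prime q -> p != q ->
  suitable (p * q) g x = (p%:Z %| g.[x%:Z])%Z (+) (q%:Z %| g.[x%:Z])%Z.
Proof.
move=> p_pr q_pr pq.
rewrite /suitable -[(p%:Z %| _)%Z]/(p %| `|_|)%N -[(q%:Z %| _)%Z]/(q %| `|_|)%N.
rewrite /gcdz absz_nat !ltz_nat; set m := `|_|%N.
have pq_gt0 : (0 < p * q)%N by rewrite muln_gt0 !prime_gt0.
have gt1E : (1 < gcdn m (p * q))%N = (p %| m)%N || (q %| m)%N.
  rewrite ltn_neqAle gcdn_gt0 pq_gt0 orbT andbT eq_sym -/(coprime m (p * q)).
  by rewrite coprimeMr ![coprime m _]coprime_sym !prime_coprime // negb_and !negbK.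
have ltE : (gcdn m (p * q) < p * q)%N = ~~ ((p %| m)%N && (q %| m)%N).
  have cpq : coprime p q by rewrite prime_coprime // dvdn_prime2.
  rewrite ltn_neqAle dvdn_leq ?dvdn_gcdr // andbT -(Gauss_dvd _ cpq).
  by congr (~~ _); apply/eqP/idP => [<-|/gcdn_idPr //]; apply: dvdn_gcdl.
by rewrite gt1E ltE; case: (p %| m)%N; case: (q %| m)%N.
Qed.

Lemma card_setX_xor (A B : finType) (SA : {set A}) (SB : {set B}) :
  #|[set z : A * B | (z.1 \in SA) (+) (z.2 \in SB)]| =
  (#|SA| * (#|B| - #|SB|) + (#|A| - #|SA|) * #|SB|)%N.
Proof.
have -> : [set z : A * B | (z.1 \in SA) (+) (z.2 \in SB)] =
          setX SA (~: SB) :|: setX (~: SA) SB.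
  by apply/setP => -[u v]; rewrite !inE /=; case: (u \in SA); case: (v \in SB).
rewrite cardsU (_ : _ :&: _ = set0) ?cards0 ?subn0; last first.
  by apply/setP => -[u v]; rewrite !inE /=; case: (u \in SA); case: (v \in SB).
by rewrite !cardsX [#|~: SB|]cardsCs [#|~: SA|]cardsCs !setCK.
Qed.

Lemma card_preimset_inj (A B : finType) (f : A -> B) (P : pred B) :
  injective f -> (#|B| <= #|A|)%N -> #|[set x | P (f x)]| = #|[set y | P y]|.
Proof.
move=> f_inj le_BA; have f_bij := inj_card_bij f_inj le_BA.
rewrite -(on_card_preimset (onW_bij [set y | P y] f_bij)).
by apply: eq_card => x; rewrite !inE.
Qed.

Lemma Fp_pair_inj (p q : nat) : prime p -> prime q -> p != q ->
  injective (fun x : 'I_(p * q) => ((x : nat)%:R : 'F_p, (x : nat)%:R : 'F_q)).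
Proof.
move=> p_pr q_pr pq x y [ep eq].
have modE r : prime r -> (x%:R : 'F_r) = y%:R -> (x %% r = y %% r)%N.
  by move=> r_pr e; rewrite -!val_Fp_nat // e.
have cpq : coprime p q by rewrite prime_coprime // dvdn_prime2.
have : (x == y %[mod p * q])%N by rewrite chinese_remainder // (modE p) ?(modE q) // !eqxx.
by rewrite !modn_small // => /eqP /val_inj.
Qed.

Lemma card_roots_Fp (r : nat) (b n2 n1 n0 N : int) :
  let f := n2 *: 'X^2 + n1 *: 'X + n0%:P in
  prime r -> (r%:Z %| N)%Z -> f.[b] = N ->
  gcdz (n2 * b) N = 1 -> gcdz N (n2 * b ^+ 2 - n0) = 1 ->
  #|[set u : 'F_r | root (map_poly intr f) u]| = 2%N.
Proof.
move=> f r_pr rN fb n2b_coprime disc_coprime.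
have Fr_eq0 z : (z%:~R == 0 :> 'F_r) = (r%:Z %| z)%Z.
  by rewrite (dvdz_pcharf (pchar_Fp r_pr)).
have rb : root (map_poly intr f) (b%:~R : 'F_r) by rewrite -dvdz_root_Fp // fb.
rewrite /f map_poly_quadratic in rb *.
apply: (card_quadratic_roots (F:='F_r) _ rb).
  rewrite Fr_eq0; apply: contra (prime_ndvdz_coprime r_pr rN n2b_coprime).
  exact: dvdz_mulr.
rewrite -subr_eq0 -rmorphXn -!rmorphM -rmorphB /= Fr_eq0.
by apply: (prime_ndvdz_coprime r_pr rN); rewrite gcdzC.
Qed.

Theorem corollary2p12 (p q : nat) (b n2 n1 n0 : int) :
  prime p -> prime q -> p != q ->
  n2 != 0 ->
  (n2 *: 'X^2 + n1 *: 'X + n0%:P : {poly int}).[b] = (p * q)%N%:Z ->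
  gcdz (n2 * b) (p * q)%N%:Z = 1 ->
  gcdz (p * q)%N%:Z (n2 * b ^+ 2 - n0) = 1 ->
  nu (p * q) (n2 *: 'X^2 + n1 *: 'X + n0%:P) = (2 * p + 2 * q - 8)%N.
Proof.
move=> p_pr q_pr pq _ fb n2b_coprime disc_coprime.
set f := n2 *: 'X^2 + n1 *: 'X + n0%:P in fb *.
pose roots r : {set 'F_r} := [set u | root (map_poly intr f) u].
have card_roots r : prime r -> (r %| p * q)%N -> #|roots r| = 2%N.
  by move=> r_pr r_dvd; apply: (card_roots_Fp r_pr _ fb).
rewrite /nu.
pose phi (x : 'I_(p * q)) := ((x : nat)%:R : 'F_p, (x : nat)%:R : 'F_q).
pose in_roots (z : 'F_p * 'F_q) := (z.1 \in roots p) (+) (z.2 \in roots q).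
have -> : [set x : 'I_(p * q) | suitable (p * q) f x] = [set x | in_roots (phi x)].
  apply/setP => x; rewrite !inE suitable_prime_prod //.
  by rewrite /in_roots /roots !inE !dvdz_root_Fp // !pmulrn.
rewrite (card_preimset_inj in_roots (Fp_pair_inj p_pr q_pr pq : injective phi)).
  rewrite card_setX_xor (card_roots p p_pr (dvdn_mulr q (dvdnn p))).
  rewrite (card_roots q q_pr (dvdn_mull p (dvdnn q))) !card_Fp //.
  by have := prime_gt1 p_pr; have := prime_gt1 q_pr; lia.
by rewrite card_prod !card_Fp // card_ord.
Qed.
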